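(* Let $\varepsilon\in(0,1/256]$. For every $\hat x\in Q_1$ there exist $\tau\in\Gamma$ and $\rho\in\{1,\dots,\lceil1/\varepsilon\rceil\}^{|\tau|}$ such that $\hat x\in P(\mathcal S(\tau),\rho)$.
   Context: Minimum Knapsack data: $n$ items with costs $c\in\mathbb{R}^n_{\ge0}$, weights $w\in\mathbb{R}^n_{\ge0}$, target $b$; items are indexed so that $1=c_1\ge c_2\ge\dots\ge c_n$. $Q=\{x\in\{0,1\}^n:w^Tx\ge b\}$ and $Q_1=\{x\in Q: x_1=1\}$. $C_\varepsilon=\lceil\log_{1+\varepsilon}(1/\varepsilon)\rceil$. $\Gamma$ is the set of integer vectors $\tau=(\tau_1,\dots,\tau_K)\in\mathbb{Z}_{\ge0}^K$ with $0\le K=|\tau|\le\lceil2\sqrt{C_\varepsilon}\rceil$, $\tau_k+k\le\tau_{k+1}$ for $k\in[K-1]$, and $\tau_K\le C_\varepsilon-1$. For $\tau\in\Gamma$, $\mathcal S(\tau)=\{S_1,\dots,S_K,S_\infty\}$ where $S_k=\{i\in\{2,\dots,n\}:(1+\varepsilon)^{-\tau_k}\ge c_i>(1+\varepsilon)^{-\min\{\tau_k+k,C_\varepsilon\}}\}$ for $k\in[K]$, and $S_\infty=\{i\in\{2,\dots,n\}: c_i\le(1+\varepsilon)^{-C_\varepsilon}\text{ and } c_i<\min_{l\in S_K}c_l\}$ (the second condition omitted if $K=0$). For $\rho\in\{1,\dots,\lceil1/\varepsilon\rceil\}^K$, $P(\mathcal S,\rho)$ is the set of $x\in\mathbb{R}^n$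 with: $x_1=1$; $w^Tx\ge b$; $\sum_{i\in S_k}x_i=\rho_k$ for $k\in[K]$ with $\rho_k<\lceil1/\varepsilon\rceil$; $\sum_{i\in S_k}x_i\ge\rho_k$ for $k\in[K]$ with $\rho_k=\lceil1/\varepsilon\rceil$; $x_i=0$ for $i\in\{2,\dots,n\}\setminus\bigcup_{k\in[K]\cup\{\infty\}}S_k$; $0\le x_i\le1$ for $i\in\bigcup_{k\in[K]\cup\{\infty\}}S_k$. *)

(* classical reals. Items are indexed 1..n; vectors are nat -> R
   (only the values at 1..n matter). *)
From Stdlib Require Import Reals Lra Lia Arith List.
Open Scope R_scope.

Fixpoint rsum (n : nat) (f : nat -> R) : R :=
  match n with
  | O => 0
  | S m => rsum m f + f (S m)
  end.

Definition Rceil (x : R) : Z := (- Int_part (- x))%Z.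

Definition Ceps (eps : R) : nat := Z.to_nat (Rceil (ln (/ eps) / ln (1 + eps))).

Definition Reps (eps : R) : nat := Z.to_nat (Rceil (/ eps)).

Definition Kmax (eps : R) : nat := Z.to_nat (Rceil (2 * sqrt (INR (Ceps eps)))).

Definition at1 (l : list nat) (k : nat) : nat := nth (k - 1) l 0%nat.

Definition in_Gamma (eps : R) (tau : list nat) : Prop :=
  (length tau <= Kmax eps)%nat /\
  (forall k, (1 <= k)%nat -> (k + 1 <= length tau)%nat ->
     (at1 tau k + k <= at1 tau (k + 1))%nat) /\
  ((0 < length tau)%nat -> (at1 tau (length tau) + 1 <= Ceps eps)%nat).

Definition inSk (n : nat) (c : nat -> R) (eps : R) (tau : list nat) (k i : nat) : bool :=
  (Nat.leb 2 i) && (Nat.leb i n) &&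
  (if Rle_dec (c i) (/ (1 + eps) ^ (at1 tau k)) then true else false) &&
  (if Rlt_dec (/ (1 + eps) ^ (Nat.min (at1 tau k + k) (Ceps eps))) (c i)
   then true else false).

(* i in S_infinity; when K > 0 the condition c_i < min_{l in S_K} c_l
   (vacuous if S_K is empty, min over the empty set = +infinity) *)
Definition inSinf (n : nat) (c : nat -> R) (eps : R) (tau : list nat) (i : nat) : Prop :=
  (2 <= i <= n)%nat /\
  c i <= / (1 + eps) ^ (Ceps eps) /\
  ((0 < length tau)%nat ->
     forall l, inSk n c eps tau (length tau) l = true -> c i < c l).

Definition inUnion (n : nat) (c : nat -> R) (eps : R) (tau : list nat) (i : nat) : Prop :=
  (exists k, (1 <= k <= length tau)%nat /\ inSk n c eps tau k i = true) \/
  inSinf n c eps tau i.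

Definition inP (n : nat) (c w : nat -> R) (b eps : R) (tau rho : list nat)
    (x : nat -> R) : Prop :=
  x 1%nat = 1 /\
  rsum n (fun i => w i * x i) >= b /\
  (forall k, (1 <= k <= length tau)%nat ->
     let s := rsum n (fun i => if inSk n c eps tau k i then x i else 0) in
     ((at1 rho k < Reps eps)%nat -> s = INR (at1 rho k)) /\
     (at1 rho k = Reps eps -> s >= INR (at1 rho k))) /\
  (forall i, (2 <= i <= n)%nat -> ~ inUnion n c eps tau i -> x i = 0) /\
  (forall i, (2 <= i <= n)%nat -> inUnion n c eps tau i -> 0 <= x i <= 1).

Definition inQ1 (n : nat) (w : nat -> R) (b : R) (x : nat -> R) : Prop :=
  (forall i, (1 <= i <= n)%nat -> x i = 0 \/ x i = 1) /\
  rsum n (fun i => w i * x i) >= b /\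
  x 1%nat = 1.

From Stdlib Require Import Reals List Lra Lia Arith Bool.
Open Scope R_scope.

(* Split the cost range ((1+eps)^-C, 1] into the geometric classes
   ((1+eps)^-(j+1), (1+eps)^-j], j < C, and call a class occupied if it contains
   an item i >= 2 with x_i = 1.  Choose tau greedily: tau_1 is the first occupied
   class, and tau_(k+1) the first occupied class at or after tau_k + k.  Then S_k
   is the union of the classes tau_k, ..., tau_k + k - 1, so every chosen item of
   cost above (1+eps)^-C lies in some S_k, and the remaining chosen items lie in
   S_infinity.  Since the gaps grow, tau_K >= K(K-1)/2, while tau_K < C; hence
   K <= 2 sqrt C.  Finally rho_k is the number of chosen items of S_k, capped at
   ceil(1/eps); it is positive because the class tau_k is occupied. *)

Section GreedyBlocks.

Variable D : nat -> bool.
Variable C : nat.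

(* Block p starts at the p-th entry t_p of the list and has length k + p. *)
Fixpoint greedy_blocks (s k : nat) (L : list nat) : Prop :=
  match L with
  | nil => forall j, (s <= j < C)%nat -> D j = false
  | t :: L' =>
      (s <= t < C)%nat /\ D t = true /\
      (forall j, (s <= j < t)%nat -> D j = false) /\
      greedy_blocks (t + k) (S k) L'
  end.

Lemma first_true_or_none s N :
  (forall j, (s <= j < s + N)%nat -> D j = false) \/
  exists t, (s <= t < s + N)%nat /\ D t = true /\
            forall j, (s <= j < t)%nat -> D j = false.
Proof.
  induction N as [|N [Hnone | [t [Ht [Dt Hfirst]]]]].
  - left; intros; lia.
  - destruct (D (s + N)%nat) eqn:E.
    + right; exists (s + N)%nat; repeat split; auto; lia.
    + left; intros j Hj.
      destruct (Nat.eq_dec j (s + N)) as [->|]; auto.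
      apply Hnone; lia.
  - right; exists t; repeat split; auto; lia.
Qed.

Lemma greedy_blocks_exist s k : (1 <= k)%nat -> exists L, greedy_blocks s k L.
Proof.
  remember (C - s)%nat as d eqn:Hd.
  revert s k Hd; induction d as [d IH] using lt_wf_ind; intros s k Hd Hk.
  destruct (first_true_or_none s (C - s)) as [Hnone | [t [Ht [Dt Hfirst]]]].
  - exists nil; intros j Hj; apply Hnone; lia.
  - destruct (IH (C - (t + k))%nat ltac:(lia) (t + k)%nat (S k) eq_refl ltac:(lia))
      as [L HL].
    exists (t :: L); repeat split; auto; lia.
Qed.

Lemma greedy_blocks_hit L : forall s k, greedy_blocks s k L ->
  forall p, (p < length L)%nat -> (nth p L 0%nat < C)%nat /\ D (nth p L 0%nat) = true.
Proof.
  induction L as [|t L IH]; intros s k HL p Hp; simpl in *; [lia|].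
  destruct HL as [Ht [Dt [_ HL]]].
  destruct p as [|p]; [split; auto; lia|].
  apply (IH _ _ HL); lia.
Qed.

Lemma greedy_blocks_ge_start L : forall s k, greedy_blocks s k L ->
  forall p, (p < length L)%nat -> (s <= nth p L 0%nat)%nat.
Proof.
  induction L as [|t L IH]; intros s k HL p Hp; simpl in *; [lia|].
  destruct HL as [Ht [_ [_ HL]]].
  destruct p as [|p]; [lia|].
  specialize (IH _ _ HL p ltac:(lia)); lia.
Qed.

Lemma greedy_blocks_gap L : forall s k, greedy_blocks s k L ->
  forall p, (S p < length L)%nat -> (nth p L 0%nat + (k + p) <= nth (S p) L 0%nat)%nat.
Proof.
  induction L as [|t L IH]; intros s k HL p Hp; simpl in *; [lia|].
  destruct HL as [_ [_ [_ HL]]].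
  destruct p as [|p].
  - pose proof (greedy_blocks_ge_start L _ _ HL 0 ltac:(lia)); simpl in *; lia.
  - specialize (IH _ _ HL p ltac:(lia)); lia.
Qed.

Lemma greedy_blocks_quadratic L : forall s k, greedy_blocks s k L ->
  forall p, (p < length L)%nat -> (2 * s + p * (2 * k + p) <= 2 * nth p L 0%nat + p)%nat.
Proof.
  induction L as [|t L IH]; intros s k HL p Hp; simpl in *; [lia|].
  destruct HL as [Ht [_ [_ HL]]].
  destruct p as [|p]; [lia|].
  specialize (IH _ _ HL p ltac:(lia)); nia.
Qed.

Lemma greedy_blocks_cover L : forall s k, greedy_blocks s k L ->
  forall j, (s <= j < C)%nat -> D j = true ->
  exists p, (p < length L)%nat /\ (nth p L 0%nat <= j < nth p L 0%nat + (k + p))%nat.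
Proof.
  induction L as [|t L IH]; intros s k HL j Hj Dj; simpl in *.
  - rewrite HL in Dj; [discriminate | lia].
  - destruct HL as [_ [_ [Hfirst HL]]].
    destruct (Nat.lt_ge_cases j t) as [Hlt|Hge].
    + rewrite Hfirst in Dj; [discriminate | lia].
    + destruct (Nat.lt_ge_cases j (t + k)) as [Hin|Hout].
      * exists 0%nat; split; lia.
      * destruct (IH _ _ HL j ltac:(lia) Dj) as [p [Hp Hjp]].
        exists (S p); split; lia.
Qed.

End GreedyBlocks.

Lemma at1_S (L : list nat) p : at1 L (S p) = nth p L 0%nat.
Proof. unfold at1; f_equal; lia. Qed.

Lemma at1_map_seq (f : nat -> nat) K k : (1 <= k <= K)%nat ->
  at1 (map f (seq 1 K)) k = f k.
Proof.
  intros Hk; unfold at1.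
  rewrite nth_indep with (d' := f 0%nat) by (rewrite length_map, length_seq; lia).
  rewrite map_nth, seq_nth by lia.
  f_equal; lia.
Qed.

Lemma le_to_nat_Rceil (x : R) (K : nat) : INR K <= x -> (K <= Z.to_nat (Rceil x))%nat.
Proof.
  intros H; unfold Rceil, Int_part.
  destruct (archimed (- x)) as [_ Hup].
  assert (Hz : (up (- x) <= 1 - Z.of_nat K)%Z).
  { apply le_IZR; rewrite minus_IZR, <- INR_IZR_INZ; simpl (IZR 1); lra. }
  lia.
Qed.

Lemma INR_le_2_sqrt (K N : nat) : (K * K <= 4 * N)%nat -> INR K <= 2 * sqrt (INR N).
Proof.
  intros H; apply le_INR in H; rewrite !mult_INR in H.
  assert (Hs := sqrt_le_1_alt _ _ H).
  rewrite sqrt_square in Hs by apply pos_INR.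
  replace (INR 4) with (2 * 2) in Hs by (simpl; lra).
  rewrite sqrt_mult_alt, sqrt_square in Hs by lra.
  exact Hs.
Qed.

Lemma Reps_ge_1 eps : 0 < eps <= 1 -> (1 <= Reps eps)%nat.
Proof.
  intros Heps; apply le_to_nat_Rceil; simpl.
  rewrite <- Rinv_1; apply Rinv_le_contravar; lra.
Qed.

Lemma greedy_blocks_in_Gamma D eps tau :
  greedy_blocks D (Ceps eps) 0 1 tau -> in_Gamma eps tau.
Proof.
  intros Htau; split; [|split].
  - destruct (length tau) as [|p] eqn:Elen; [lia|].
    apply le_to_nat_Rceil, INR_le_2_sqrt.
    pose proof (greedy_blocks_quadratic D _ tau 0 1 Htau p ltac:(lia)).
    pose proof (proj1 (greedy_blocks_hit D _ tau 0 1 Htau p ltac:(lia))).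
    nia.
  - intros k Hk1 Hk2; destruct k as [|p]; [lia|].
    replace (S p + 1)%nat with (S (S p)) by lia.
    rewrite !at1_S.
    pose proof (greedy_blocks_gap D _ tau 0 1 Htau p ltac:(lia)); lia.
  - intros Hpos; destruct (length tau) as [|p] eqn:Elen; [lia|].
    rewrite at1_S.
    pose proof (proj1 (greedy_blocks_hit D _ tau 0 1 Htau p ltac:(lia))); lia.
Qed.

Lemma inv_pow_antitone eps m m' : 0 < eps -> (m <= m')%nat ->
  / (1 + eps) ^ m' <= / (1 + eps) ^ m.
Proof.
  intros Heps Hm; apply Rinv_le_contravar.
  - apply pow_lt; lra.
  - apply Rle_pow; [lra | exact Hm].
Qed.

Lemma crossing_index (a : nat -> R) (y : R) N : y <= a 0%nat -> a N < y ->
  exists j, (j < N)%nat /\ a (S j) < y /\ y <= a j.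
Proof.
  induction N as [|N IH]; intros H0 HN; [lra|].
  destruct (Rle_dec y (a N)) as [H|H].
  - exists N; repeat split; auto.
  - destruct IH as [j Hj]; [exact H0 | lra |].
    exists j; split; [lia | tauto].
Qed.

Fixpoint ncount (n : nat) (f : nat -> bool) : nat :=
  match n with
  | O => O
  | S m => (ncount m f + (if f (S m) then 1 else 0))%nat
  end.

Lemma ncount_pos n f i : (1 <= i <= n)%nat -> f i = true -> (1 <= ncount n f)%nat.
Proof.
  induction n as [|n IH]; intros Hi Hf; simpl; [lia|].
  destruct (Nat.eq_dec i (S n)) as [->|Hne].
  - rewrite Hf; lia.
  - specialize (IH ltac:(lia) Hf); lia.
Qed.

Definition is_one (r : R) : bool := if Req_dec_T r 1 then true else false.

Lemma is_one_spec r : is_one r = true <-> r = 1.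
Proof. unfold is_one; destruct (Req_dec_T r 1); split; congruence. Qed.

Lemma rsum_indicator_binary n (g : nat -> bool) (x : nat -> R) :
  (forall i, (1 <= i <= n)%nat -> x i = 0 \/ x i = 1) ->
  rsum n (fun i => if g i then x i else 0)
  = INR (ncount n (fun i => g i && is_one (x i))).
Proof.
  induction n as [|n IH]; intros Hx; simpl; [reflexivity|].
  rewrite IH, plus_INR by (intros; apply Hx; lia).
  f_equal; destruct (g (S n)); simpl; [|reflexivity].
  destruct (Hx (S n) ltac:(lia)) as [E|E]; rewrite E.
  - destruct (is_one 0) eqn:E0; [apply is_one_spec in E0; lra | reflexivity].
  - rewrite (proj2 (is_one_spec 1) eq_refl); reflexivity.
Qed.

Section Covering.

Variables (n : nat) (c : nat -> R) (eps : R) (x : nat -> R).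
Hypothesis Heps : 0 < eps.
Hypothesis Hc1 : c 1%nat = 1.
Hypothesis Hcmono : forall i, (1 <= i)%nat -> (i < n)%nat -> c (S i) <= c i.
Hypothesis Hbin : forall i, (1 <= i <= n)%nat -> x i = 0 \/ x i = 1.

Lemma c_le_1 i : (1 <= i <= n)%nat -> c i <= 1.
Proof.
  induction i as [|i IH]; intros Hi; [lia|].
  destruct (Nat.eq_dec i 0) as [->|Hne]; [lra|].
  specialize (Hcmono i ltac:(lia) ltac:(lia)); specialize (IH ltac:(lia)); lra.
Qed.

Definition in_class (i j : nat) : bool :=
  (if Rle_dec (c i) (/ (1 + eps) ^ j) then true else false) &&
  (if Rlt_dec (/ (1 + eps) ^ S j) (c i) then true else false).

Lemma in_class_spec i j : in_class i j = true <->
  c i <= / (1 + eps) ^ j /\ / (1 + eps) ^ S j < c i.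
Proof.
  unfold in_class; destruct (Rle_dec _ _), (Rlt_dec _ _); simpl;
    split; intros H; tauto || discriminate.
Qed.

Definition occupied (j : nat) : bool :=
  existsb (fun i => is_one (x i) && in_class i j) (seq 2 (n - 1)).

Lemma occupied_spec j : occupied j = true <->
  exists i, (2 <= i <= n)%nat /\ x i = 1 /\ in_class i j = true.
Proof.
  unfold occupied; rewrite existsb_exists; split.
  - intros [i [Hin Hi]]; apply in_seq in Hin; apply andb_prop in Hi.
    exists i; rewrite <- is_one_spec; repeat split; tauto || lia.
  - intros [i [Hi [Hxi Hcl]]]; exists i; split; [apply in_seq; lia|].
    apply andb_true_intro; rewrite is_one_spec; tauto.
Qed.

Lemma inSk_intro tau k i : (2 <= i <= n)%nat ->
  c i <= / (1 + eps) ^ at1 tau k ->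
  / (1 + eps) ^ Nat.min (at1 tau k + k) (Ceps eps) < c i ->
  inSk n c eps tau k i = true.
Proof.
  intros Hi Hup Hlow; unfold inSk.
  rewrite (proj2 (Nat.leb_le 2 i)), (proj2 (Nat.leb_le i n)) by lia.
  destruct (Rle_dec _ _); [|contradiction].
  destruct (Rlt_dec _ _); [reflexivity | contradiction].
Qed.

Lemma inSk_lower tau k i : inSk n c eps tau k i = true ->
  / (1 + eps) ^ Nat.min (at1 tau k + k) (Ceps eps) < c i.
Proof.
  unfold inSk; destruct (Rlt_dec _ _); [auto|].
  rewrite andb_false_r; discriminate.
Qed.

Variable tau : list nat.
Hypothesis Htau : greedy_blocks occupied (Ceps eps) 0 1 tau.

Definition chosen_count (k : nat) : nat :=
  ncount n (fun i => inSk n c eps tau k i && is_one (x i)).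

Lemma chosen_count_pos k : (1 <= k <= length tau)%nat -> (1 <= chosen_count k)%nat.
Proof.
  intros Hk; destruct k as [|p]; [lia|].
  destruct (greedy_blocks_hit _ _ tau 0 1 Htau p ltac:(lia)) as [Hlt Hocc].
  apply occupied_spec in Hocc as [i [Hi [Hxi Hcl]]].
  apply in_class_spec in Hcl as [Hup Hlow].
  apply (ncount_pos n _ i); [lia|].
  rewrite Hxi, (proj2 (is_one_spec 1) eq_refl), andb_true_r.
  apply inSk_intro; rewrite ?at1_S; [lia | exact Hup |].
  eapply Rle_lt_trans; [|exact Hlow]; apply inv_pow_antitone; [exact Heps | lia].
Qed.

Lemma chosen_in_union i : (2 <= i <= n)%nat -> x i = 1 -> inUnion n c eps tau i.
Proof.
  intros Hi Hxi.
  destruct (Rle_dec (c i) (/ (1 + eps) ^ Ceps eps)) as [Hsmall|Hlarge].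
  - right; repeat split; [lia | lia | exact Hsmall |].
    intros _ l Hl; apply inSk_lower in Hl.
    eapply Rle_lt_trans; [exact Hsmall|]; eapply Rle_lt_trans; [|exact Hl].
    apply inv_pow_antitone; [exact Heps | lia].
  - apply Rnot_le_lt in Hlarge.
    destruct (crossing_index (fun j => / (1 + eps) ^ j) (c i) (Ceps eps))
      as [j [Hj [Hlow Hup]]]; [simpl; rewrite Rinv_1; apply c_le_1; lia | exact Hlarge |].
    assert (Hocc : occupied j = true)
      by (apply occupied_spec; exists i; rewrite in_class_spec; tauto).
    destruct (greedy_blocks_cover _ _ tau 0 1 Htau j ltac:(lia) Hocc) as [p [Hp Hjp]].
    left; exists (S p); split; [lia|].
    apply inSk_intro; rewrite ?at1_S; [lia | |].
    + eapply Rle_trans; [exact Hup|]; apply inv_pow_antitone; [exact Heps | lia].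
    + eapply Rle_lt_trans; [|exact Hlow]; apply inv_pow_antitone; [exact Heps | lia].
Qed.

Definition capped_counts : list nat :=
  map (fun k => Nat.min (chosen_count k) (Reps eps)) (seq 1 (length tau)).

Lemma capped_counts_range k : (1 <= Reps eps)%nat -> (1 <= k <= length tau)%nat ->
  (1 <= at1 capped_counts k <= Reps eps)%nat.
Proof.
  intros HR Hk; unfold capped_counts; rewrite at1_map_seq by lia.
  pose proof (chosen_count_pos k Hk); lia.
Qed.

Lemma in_P_capped_counts w b : (1 <= Reps eps)%nat ->
  x 1%nat = 1 -> rsum n (fun i => w i * x i) >= b ->
  inP n c w b eps tau capped_counts x.
Proof.
  intros HR Hx1 Hsum; split; [exact Hx1|]; split; [exact Hsum|]; split; [|split].
  - intros k Hk; cbv zeta.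
    rewrite rsum_indicator_binary by exact Hbin; fold (chosen_count k).
    unfold capped_counts; rewrite at1_map_seq by lia.
    pose proof (chosen_count_pos k Hk); split; intros Hrho.
    + f_equal; lia.
    + apply Rle_ge, le_INR; lia.
  - intros i Hi Hnot; destruct (Hbin i ltac:(lia)) as [H|H]; [exact H|].
    exfalso; apply Hnot, chosen_in_union; assumption.
  - intros i Hi _; destruct (Hbin i ltac:(lia)) as [H|H]; rewrite H; lra.
Qed.

End Covering.

Theorem lemma5 (n : nat) (c w : nat -> R) (b eps : R)
  (Heps : 0 < eps <= 1 / 256)
  (Hn : (1 <= n)%nat)
  (Hc1 : c 1%nat = 1)
  (Hcmono : forall i, (1 <= i)%nat -> (i < n)%nat -> c (S i) <= c i)
  (Hcnn : forall i, (1 <= i <= n)%nat -> 0 <= c i)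
  (Hwnn : forall i, (1 <= i <= n)%nat -> 0 <= w i) :
  forall xh : nat -> R, inQ1 n w b xh ->
  exists (tau rho : list nat),
    in_Gamma eps tau /\
    length rho = length tau /\
    (forall k, (1 <= k <= length rho)%nat -> (1 <= at1 rho k <= Reps eps)%nat) /\
    inP n c w b eps tau rho xh.
Proof.
  intros xh [Hbin [Hsum Hx1]].
  assert (HR : (1 <= Reps eps)%nat) by (apply Reps_ge_1; lra).
  destruct (greedy_blocks_exist (occupied n c eps xh) (Ceps eps) 0 1 ltac:(lia)) as [tau Htau].
  exists tau, (capped_counts n c eps xh tau).
  split; [|split; [|split]].
  - exact (greedy_blocks_in_Gamma _ eps tau Htau).
  - unfold capped_counts; rewrite length_map, length_seq; reflexivity.
  - intros k Hk; unfold capped_counts in Hk; rewrite length_map, length_seq in Hk.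
    apply capped_counts_range; assumption || lra.
  - apply in_P_capped_counts; assumption || lra.
Qed.
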